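(* $P(2,3)=3$, and $P(2^k,3)=6$ for every integer $k>1$.
   Context: For positive integers $m,n$, let $\mathbf{Z}_m$ be the integers modulo $m$ and $T:\mathbf{Z}_m^n\to\mathbf{Z}_m^n$, $T(a_0,\dots,a_{n-1})=(a_0+a_1,a_1+a_2,\dots,a_{n-1}+a_0)$. For $\mathbf{a}\in\mathbf{Z}_m^n$ the cycle length of $(T^k\mathbf{a})_{k\ge0}$ is the smallest positive integer $P$ such that there is $N$ with $T^{k+P}\mathbf{a}=T^k\mathbf{a}$ for all $k\ge N$. $P(m,n)$ denotes the maximum of these cycle lengths over all $\mathbf{a}\in\mathbf{Z}_m^n$. *)

From mathcomp Require Import all_boot all_order all_algebra.
Set Implicit Arguments. Unset Strict Implicit. Unset Printing Implicit Defensive.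
Import GRing.Theory.
Local Open Scope ring_scope.

(* Vectors in Z_m^n, indexed by 'I_n.  NB: 'Z_m is Z/mZ only for m >= 2;
   the statement below only uses m = 2 and m = 2^k, k > 1. *)
Definition vecZ (m n : nat) := {ffun 'I_n -> 'Z_m}.

Definition Tmap (m n : nat) (a : vecZ m n) : vecZ m n :=
  [ffun i : 'I_n => a i + a (ordS i)].

Definition is_eventual_period (m n : nat) (a : vecZ m n) (Q : nat) : Prop :=
  (0 < Q)%N /\ exists N : nat, forall k : nat, (N <= k)%N ->
     iter (k + Q) (@Tmap m n) a = iter k (@Tmap m n) a.

Definition cycle_length (m n : nat) (a : vecZ m n) (c : nat) : Prop :=
  is_eventual_period a c /\ forall Q, is_eventual_period a Q -> (c <= Q)%N.

Definition Pmax_is (m n p : nat) : Prop :=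
  (exists a : vecZ m n, cycle_length a p) /\
  forall (a : vecZ m n) (c : nat), cycle_length a c -> (c <= p)%N.

From mathcomp Require Import all_boot all_order all_algebra.
From mathcomp Require Import ring.
Import GRing.Theory.
Set Implicit Arguments.
Unset Strict Implicit.
Unset Printing Implicit Defensive.
Local Open Scope ring_scope.

(* The coordinate sum s satisfies s(T v) = 2 s(v), so for m = 2^k every orbit
   reaches the sum-zero plane after k steps.  There T^3 = -1, so T^6 = 1, and
   T^3 = 1 when m = 2: every cycle length is at most 3 resp. 6.  For the lower
   bound apply D v = (v_i - v_(i+1))_i, which commutes with T and lands in the
   sum-zero plane, where T is invertible: an eventual period of (1,0,0) is then
   an exact period of D(1,0,0) = (1,0,-1), whose orbit (1,0,-1), (1,-1,0),
   (0,-1,1), (-1,0,1), (-1,1,0), (0,1,-1) has length 3 when 2 = 0 and 6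
   otherwise. *)

Section Ducci3.

Variable m : nat.
Local Notation V := (vecZ m 3).
Local Notation T := (@Tmap m 3).

Definition vec3 (x y z : 'Z_m) : V := [ffun i : 'I_3 => nth 0 [:: x; y; z] i].

Lemma vec3_surj (v : V) : exists x y z, v = vec3 x y z.
Proof.
exists (v ord0), (v (inord 1)), (v ord_max).
apply/ffunP => -[[|[|[|i]]] lt_i3] //; rewrite ffunE /=; congr (v _);
  by apply: val_inj; rewrite /= ?inordK.
Qed.

Lemma vec3_inj (x y z x' y' z' : 'Z_m) :
  vec3 x y z = vec3 x' y' z' -> [/\ x = x', y = y' & z = z'].
Proof.
move=> eq_v; have coord i := congr1 (fun v : V => v i) eq_v.
by move: (coord ord0) (coord (inord 1)) (coord ord_max); rewrite !ffunE /= !inordK.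
Qed.

Lemma Tmap_vec3 (x y z : 'Z_m) : T (vec3 x y z) = vec3 (x + y) (y + z) (z + x).
Proof. by apply/ffunP => -[[|[|[|i]]] lt_i3] //; rewrite !ffunE. Qed.

Definition Dmap (v : V) : V := [ffun i => v i - v (ordS i)].

Lemma Dmap_vec3 (x y z : 'Z_m) : Dmap (vec3 x y z) = vec3 (x - y) (y - z) (z - x).
Proof. by apply/ffunP => -[[|[|[|i]]] lt_i3] //; rewrite !ffunE. Qed.

Definition vsum (v : V) : 'Z_m := \sum_i v i.

Lemma vsum_vec3 (x y z : 'Z_m) : vsum (vec3 x y z) = x + y + z.
Proof. by rewrite /vsum !big_ord_recr big_ord0 /= !ffunE add0r. Qed.

Lemma vsum_Tmap (v : V) : vsum (T v) = 2%:R * vsum v.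
Proof. by have [x [y [z ->]]] := vec3_surj v; rewrite Tmap_vec3 !vsum_vec3; ring. Qed.

Lemma vsum_iter_Tmap n (v : V) : vsum (iter n T v) = 2%:R ^+ n * vsum v.
Proof. by elim: n => [|n IHn]; rewrite ?mul1r // iterS vsum_Tmap IHn exprS mulrA. Qed.

Lemma vsum_Dmap (v : V) : vsum (Dmap v) = 0.
Proof. by have [x [y [z ->]]] := vec3_surj v; rewrite Dmap_vec3 vsum_vec3; ring. Qed.

Lemma Dmap_Tmap (v : V) : Dmap (T v) = T (Dmap v).
Proof.
have [x [y [z ->]]] := vec3_surj v.
by rewrite Tmap_vec3 !Dmap_vec3 Tmap_vec3; congr vec3; ring.
Qed.

Lemma Dmap_iter_Tmap n (v : V) : Dmap (iter n T v) = iter n T (Dmap v).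
Proof. by elim: n => [|n IHn] //; rewrite !iterS Dmap_Tmap IHn. Qed.

(* With S the cyclic shift, T^2 - T + 1 = 1 + S + S^2 vanishes on the sum-zero
   plane, hence so does T^3 + 1 = (T + 1)(T^2 - T + 1). *)
Lemma iter3_Tmap_sum0 (x y z : 'Z_m) :
  x + y + z = 0 -> iter 3 T (vec3 x y z) = vec3 (- x) (- y) (- z).
Proof.
move=> /eqP; rewrite addrC addr_eq0 => /eqP ->.
by rewrite /= !Tmap_vec3; congr vec3; ring.
Qed.

Definition sum0_periodic p := forall w : V, vsum w = 0 -> iter p T w = w.

Lemma sum0_periodic6 : sum0_periodic 6.
Proof.
move=> w; have [x [y [z ->]]] := vec3_surj w; rewrite vsum_vec3 => sum0.
rewrite (iterD 3 3) !iter3_Tmap_sum0 ?opprK // -!opprD sum0 ?oppr0 //.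
Qed.

Lemma sum0_periodic_eventual_period p N (a : V) :
  (0 < p)%N -> sum0_periodic p -> 2%:R ^+ N = 0 :> 'Z_m -> is_eventual_period a p.
Proof.
move=> p_gt0 per pow2N_eq0; split=> //; exists N => n le_Nn.
by rewrite addnC iterD per // vsum_iter_Tmap -(subnKC le_Nn) exprD pow2N_eq0 !mul0r.
Qed.

Lemma eventual_period_Dmap p (a : V) Q :
  (0 < p)%N -> sum0_periodic p -> is_eventual_period a Q -> iter Q T (Dmap a) = Dmap a.
Proof.
move=> p_gt0 per [_ [N perN]].
have iter_mul n : iter (p * n) T (Dmap a) = Dmap a.
  by elim: n => [|n IHn]; rewrite ?muln0 // mulnS iterD IHn per ?vsum_Dmap.
have := congr1 Dmap (perN (p * N)%N (leq_pmull _ p_gt0)).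
by rewrite addnC !Dmap_iter_Tmap iterD !iter_mul.
Qed.

Lemma iter_Tmap_fixed_lt6 Q :
  (0 < Q < 6)%N -> iter Q T (vec3 1 0 (-1)) = vec3 1 0 (-1) ->
  Q = 3%N /\ 2%:R = 0 :> 'Z_m.
Proof.
case: Q => [|[|[|[|[|[|Q]]]]]] //= _;
  rewrite !Tmap_vec3 !(addr0, add0r, addrN, addNr) => /vec3_inj[e0 e1 _].
- by move/eqP: e1; rewrite oppr_eq0 oner_eq0.
- by move/eqP: e0; rewrite eq_sym oner_eq0.
- by split=> //; apply/eqP; move/eqP: e0; rewrite eq_sym -subr_eq0 opprK.
- by move/eqP: e1; rewrite oner_eq0.
- by move/eqP: e0; rewrite eq_sym oner_eq0.
Qed.

Lemma Pmax_is_sum0_periodic p N :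
  (0 < p)%N -> sum0_periodic p -> 2%:R ^+ N = 0 :> 'Z_m ->
  (forall Q, (0 < Q < p)%N -> iter Q T (vec3 1 0 (-1)) != vec3 1 0 (-1)) ->
  Pmax_is m 3 p.
Proof.
move=> p_gt0 per pow2N_eq0 not_fixed.
have evper a := sum0_periodic_eventual_period a p_gt0 per pow2N_eq0.
split=> [|a c [_ min_c]]; last exact: min_c.
exists (vec3 1 0 0); split=> // Q perQ.
have [Q_gt0 _] := perQ.
have := eventual_period_Dmap p_gt0 per perQ; rewrite Dmap_vec3 !subr0 sub0r => /eqP.
by rewrite leqNgt; apply: contraTN => lt_Qp; apply: not_fixed; rewrite Q_gt0.
Qed.

End Ducci3.

Lemma sum0_periodic3_Z2 : sum0_periodic 2 3.
Proof.
move=> w; have [x [y [z ->]]] := vec3_surj w; rewrite vsum_vec3 => sum0.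
by rewrite iter3_Tmap_sum0 // !oppr_pchar2.
Qed.

Lemma Zp_exp2_eq0 k : (0 < k)%N -> 2%:R ^+ k = 0 :> 'Z_(2 ^ k).
Proof. by move=> k_gt0; rewrite -natrX pchar_Zp // -{1}(expn0 2) ltn_exp2l. Qed.

Lemma Zp_exp2_two_neq0 k : (1 < k)%N -> 2%:R != 0 :> 'Z_(2 ^ k).
Proof.
move=> k_gt1; have lt2_2k : (2 < 2 ^ k)%N by rewrite -{1}(expn1 2) ltn_exp2l.
apply/eqP => /(congr1 (@nat_of_ord _)); rewrite val_Zp_nat ?modn_small //; exact: ltnW.
Qed.

Theorem proposition5p2 :
  Pmax_is 2 3 3 /\ (forall k : nat, (1 < k)%N -> Pmax_is (2 ^ k) 3 6).
Proof.
split=> [|k k_gt1].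
- apply: (Pmax_is_sum0_periodic (N := 1)) => //.
  + exact: sum0_periodic3_Z2.
  + exact: (@Zp_exp2_eq0 1).
  + move=> Q /andP[Q_gt0 lt_Q3]; apply/negP => /eqP.
    have lt_Q6 : (0 < Q < 6)%N by rewrite Q_gt0 (ltn_trans lt_Q3).
    by move=> /(iter_Tmap_fixed_lt6 lt_Q6) [Q3]; rewrite Q3 in lt_Q3.
- apply: (Pmax_is_sum0_periodic (N := k)) => //.
  + exact: sum0_periodic6.
  + exact/Zp_exp2_eq0/ltnW.
  + move=> Q lt_Q6; apply/negP => /eqP /(iter_Tmap_fixed_lt6 lt_Q6) [_].
    exact/eqP/Zp_exp2_two_neq0.
Qed.
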